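(* Let $k\ge 4$ be even and let $G$ be the $k$-uniform sunflower, with Laplacian tensor $\mathcal L$. Then $G$ is odd-bipartite, and $\lambda(\mathcal L)$ is the unique root in the interval $(2,4)$ of the equation $(\mu-2)-\left(\frac{1}{\mu-1}\right)^{\frac{1}{k-1}}-\left(\frac{1}{\mu-1}\right)^{k-1}=0$.
   Context: A $k$-uniform hypergraph $G=(V,E)$ ($k\ge 3$) is a simple undirected hypergraph with vertex set $V=[n]$ and a nonempty edge set $E$ of $k$-element subsets of $V$; $d_i$ denotes the number of edges containing vertex $i$. The $k$-uniform sunflower has vertex set $\{i_{j,s}: j\in[k-1], s\in[k]\}\cup\{i_k\}$ (all distinct) and edges $\{i_{j,1},\ldots,i_{j,k}\}$ for $j\in[k-1]$ together with $\{i_{1,1},i_{2,1},\ldots,i_{k-1,1},i_k\}$. The Laplacian tensor is $\mathcal L=\mathcal D-\mathcal A$, where $\mathcal A$ is the order-$k$ dimension-$n$ tensor with $a_{i_1\ldots i_k}=\frac1{(k-1)!}$ if $\{i_1,\ldots,i_k\}\in E$ and $0$ otherwise, and $\mathcal D$ is diagonal with $d_{i\ldots i}=d_i$; thus $(\mathcal L\mathbf x^{k-1})_i=d_ix_i^{k-1}-\sum_{e\in E,\,i\in e}\prod_{s\in e\setminus\{i\}}x_s$. A real $\lambda$ is an H-eigenvalue of $\mathcal L$ if some $\mathbf x\in\mathbb R^n\setminus\{0\}$ satisfies $(\mathcal L\mathbf x^{k-1})_i=\lambda x_i^{k-1}$ for all $i$; $\lambda(\mathcal L)$ is the largest H-eigenvalue.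 For even $k$, $G$ is odd-bipartite if $V$ can be partitioned into two nonempty disjoint sets $V_1,V_2$ such that every edge meets $V_1$ in an odd number of vertices. *)

From HB Require Import structures.
From mathcomp Require Import all_boot all_order all_algebra.
From mathcomp Require Import reals exp.
Set Implicit Arguments. Unset Strict Implicit. Unset Printing Implicit Defensive.
Import Order.TTheory GRing.Theory Num.Theory.
Local Open Scope ring_scope.

Section Hypergraph.
Variables (R : realType) (n k : nat) (E : {set {set 'I_n}}).

Definition k_uniform : Prop := E != set0 /\ forall e, e \in E -> #|e| = k.

Definition degree (i : 'I_n) : nat := #|[set e in E | i \in e]|.

Definition adj_entry (i : 'I_n) (f : {ffun 'I_k.-1 -> 'I_n}) : R :=
  if (i |: [set f j | j in 'I_k.-1]) \in E then ((k.-1)`!%:R)^-1 else 0.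

Definition adj_apply (x : 'I_n -> R) (i : 'I_n) : R :=
  \sum_(f : {ffun 'I_k.-1 -> 'I_n}) adj_entry i f * \prod_(j < k.-1) x (f j).

Definition lap_apply (x : 'I_n -> R) (i : 'I_n) : R :=
  (degree i)%:R * x i ^+ k.-1 - adj_apply x i.

Definition H_eigenvalue (lam : R) : Prop :=
  exists x : 'I_n -> R, (exists i, x i != 0) /\
    forall i, lap_apply x i = lam * x i ^+ k.-1.

Definition largest_H_eigenvalue (lam : R) : Prop :=
  H_eigenvalue lam /\ forall mu, H_eigenvalue mu -> mu <= lam.

Definition odd_bipartite : Prop :=
  exists V1 : {set 'I_n}, [/\ V1 != set0, ~: V1 != set0 &
    forall e, e \in E -> odd #|e :&: V1| ].

End Hypergraph.

(* k-uniform sunflower: vertex i_{j,s} (j in [k-1], s in [k]) is labelled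
   (j-1)*k + (s-1), and i_k is labelled (k-1)*k. *)
Definition sunflower_n (k : nat) : nat := (k.-1 * k).+1.

Definition sunflower_center (k : nat) : 'I_(sunflower_n k) :=
  @Ordinal (sunflower_n k) (k.-1 * k) (ltnSn _).

Definition sunflower_petal (k : nat) (j : nat) : {set 'I_(sunflower_n k)} :=
  [set v : 'I_(sunflower_n k) | ((v %/ k)%N == j) && (v < k.-1 * k)%N].

Definition sunflower_core (k : nat) : {set 'I_(sunflower_n k)} :=
  sunflower_center k |:
  [set v : 'I_(sunflower_n k) | ((v %% k)%N == 0%N) && (v < k.-1 * k)%N].

Definition sunflower_edges (k : nat) : {set {set 'I_(sunflower_n k)}} :=
  sunflower_core k |: [set sunflower_petal k j | j : 'I_k.-1].

Definition sunflower_eq (R : realType) (k : nat) (mu : R) : R :=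
  (mu - 2) - powR (mu - 1)^-1 ((k.-1)%:R^-1) - ((mu - 1)^-1) ^+ k.-1.

(* Write m = k - 1 (odd), a = mu - 1 and X v = x v ^+ k >= 0.  For an H-eigenpair (mu, x)
   with mu > 2 the eigen-equations say that a petal product P_j equals -a X v at each leaf v
   of the petal, P_j + P_C = (2 - mu) X h at its hub h and P_C = -a X center for the core
   product P_C.  As all leaves of a petal then carry the same X, we get -P_j <= a^-m X h, so
   (mu - 2 - a^-m) X h <= -P_C at every hub, and multiplying over the core gives
   a (mu - 2 - a^-m) ^+ m <= 1, i.e. f(mu) <= 0 for the increasing left-hand side f of the
   characteristic equation.  Conversely, at the root lam of f the vector equal to 1 on the
   leaves, -(lam - 1) on the hubs and (lam - 1) ^ (1 - 1/m) at the center is an eigenvector.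
   The root lies in (2, 4): substituting mu = 1 + y^-m turns f into a polynomial in y, to which
   the intermediate value theorem applies.  The set of hubs meets each petal once and the core
   m times, which makes the sunflower odd-bipartite. *)

From HB Require Import structures.
From mathcomp Require Import all_boot all_order all_algebra.
From mathcomp Require Import reals exp.
From mathcomp Require Import zify ring lra.
From mathcomp Require Import polyrcf.
Import Order.TTheory GRing.Theory Num.Theory.
Local Open Scope ring_scope.
Set Implicit Arguments. Unset Strict Implicit. Unset Printing Implicit Defensive.

Section UniformLaplacian.
Variables (R : realType) (n m : nat) (E : {set {set 'I_n}}).
Hypothesis E_card : forall e, e \in E -> #|e| = m.+1.

Lemma edge_ffun_imset (f : {ffun 'I_m -> 'I_n}) (i : 'I_n) e :
  e \in E -> i |: [set f j | j in 'I_m] = e ->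
  [set f j | j in 'I_m] = e :\ i /\ {in 'I_m &, injective f}.
Proof.
move=> eE def; have := E_card eE; rewrite -def cardsU1.
have := leq_imset_card f 'I_m; rewrite card_ord.
have [i_img|i_img] := boolP (i \in [set f j | j in 'I_m]).
  by rewrite /= add0n => le card_img; rewrite card_img ltnn in le.
rewrite /= add1n => _ [card_img]; split; first by rewrite setU1K.
by apply/imset_injP; rewrite card_img card_ord.
Qed.

Lemma card_edge_ffuns (i : 'I_n) e : e \in E -> i \in e ->
  #|[set f : {ffun 'I_m -> 'I_n} | i |: [set f j | j in 'I_m] == e]| = m`!.
Proof.
move=> eE ie.
have card_ei : #|e :\ i| = m by move: (E_card eE); rewrite (cardsD1 i) ie => -[].
suff -> : [set f : {ffun 'I_m -> 'I_n} | i |: [set f j | j in 'I_m] == e] =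
          [set f : {ffun 'I_m -> 'I_n} in ffun_on (mem (e :\ i)) | injectiveb f].
  by rewrite card_inj_ffuns_on card_ei card_ord ffactnn.
apply/setP => f; rewrite !inE; apply/eqP/andP => [def|[/ffun_onP f_on /injectiveP f_inj]].
  have [img f_inj] := edge_ffun_imset eE def; split.
    by apply/ffun_onP => j; rewrite -img imset_f.
  by apply/injectiveP => a b; apply: f_inj.
suff img : [set f j | j in 'I_m] = e :\ i by rewrite img setD1K.
apply/eqP; rewrite eqEcard card_imset ?card_ord ?card_ei // leqnn andbT.
by apply/subsetP => y /imsetP [j _ ->]; apply: f_on.
Qed.

(* Each edge e containing i is hit by exactly m! tuples, cancelling the 1/m! in the tensor. *)
Lemma adj_apply_edges (x : 'I_n -> R) i :
  adj_apply m.+1 E x i = \sum_(e in E | i \in e) \prod_(s in e :\ i) x s.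
Proof.
rewrite /adj_apply /adj_entry /=; set c := ((m`!)%:R : R)^-1.
transitivity (\sum_(f : {ffun 'I_m -> 'I_n}) \sum_(e in E | i \in e)
   (if i |: [set f j | j in 'I_m] == e then c * \prod_(j < m) x (f j) else 0)).
  apply: eq_bigr => f _; case: ifP => fE.
    rewrite (bigD1 (i |: [set f j | j in 'I_m])) /=; last by rewrite fE setU11.
    by rewrite eqxx [X in _ + X]big1 ?addr0 // => e /andP [_ /negbTE]; rewrite eq_sym => ->.
  rewrite mul0r [RHS]big1 // => e /andP [eE _]; case: eqP => // def.
  by rewrite def eE in fE.
rewrite exchange_big /=; apply: eq_bigr => e /andP [eE ie]; rewrite -big_mkcond /=.
rewrite (eq_bigr (fun=> c * \prod_(s in e :\ i) x s)); last first.
  by move=> f /eqP def; have [<- f_inj] := edge_ffun_imset eE def; rewrite big_imset.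
rewrite sumr_const.
have -> : #|[pred f : {ffun 'I_m -> 'I_n} | i |: [set f j | j in 'I_m] == e]| = m`!.
  by rewrite -(card_edge_ffuns eE ie); apply: eq_card => f; rewrite inE.
by rewrite -mulr_natl mulrA mulfV ?mul1r // pnatr_eq0 -lt0n fact_gt0.
Qed.

Lemma lap_apply_mul_self (x : 'I_n -> R) i :
  lap_apply m.+1 E x i * x i =
  (degree E i)%:R * x i ^+ m.+1 - \sum_(e in [set e in E | i \in e]) \prod_(s in e) x s.
Proof.
rewrite /lap_apply adj_apply_edges mulrBl -mulrA -exprSr; congr (_ - _).
rewrite mulr_suml; apply: eq_big => [e|e /andP [_ ie]]; first by rewrite inE.
by rewrite (big_setD1 _ ie) mulrC.
Qed.

End UniformLaplacian.

Section CharacteristicEquation.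
Variables (R : realType) (m : nat).
Hypothesis m_gt0 : (0 < m)%N.
Local Notation k := m.+1.
Local Notation f := (@sunflower_eq R k).

Lemma powR_invnK (a : R) : 0 <= a -> powR a m%:R^-1 ^+ m = a.
Proof.
move=> a_ge0; rewrite -powR_mulrn ?powR_ge0 // -powRrM mulVf ?powRr1 //.
by rewrite pnatr_eq0 -lt0n.
Qed.

Lemma powR_exprK (y : R) : 0 <= y -> powR (y ^+ m) m%:R^-1 = y.
Proof.
move=> y_ge0; rewrite -powR_mulrn // -powRrM mulfV ?powRr1 //.
by rewrite pnatr_eq0 -lt0n.
Qed.

Lemma sunflower_eq_lt (u v : R) : 1 < u -> u < v -> f u < f v.
Proof.
move=> u_gt1 uv; rewrite /sunflower_eq /=.
have inv_lt : (v - 1)^-1 < (u - 1)^-1 by rewrite ltf_pV2 ?posrE; lra.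
have inv_ge0 : 0 <= (v - 1)^-1 by rewrite invr_ge0; lra.
have inv_le := ltW inv_lt.
have inv_u_ge0 := le_trans inv_ge0 inv_le.
have : (v - 1)^-1 ^+ m <= (u - 1)^-1 ^+ m by apply: lerXn2r; rewrite ?nnegrE.
have : powR (v - 1)^-1 m%:R^-1 <= powR (u - 1)^-1 m%:R^-1.
  by apply: ge0_ler_powR; rewrite ?nnegrE // invr_ge0 ler0n.
lra.
Qed.

Lemma sunflower_eq_inj (u v : R) : 1 < u -> 1 < v -> f u = f v -> u = v.
Proof.
move=> u_gt1 v_gt1 fuv; case: (ltgtP u v) => // [uv|vu].
  by have := sunflower_eq_lt u_gt1 uv; rewrite fuv ltxx.
by have := sunflower_eq_lt v_gt1 vu; rewrite fuv ltxx.
Qed.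

Lemma sunflower_eq_invexpr (y : R) : 0 < y ->
  f (1 + (y ^+ m)^-1) = (1 - y ^+ m - y ^+ k - y ^+ (m * k)) / y ^+ m.
Proof.
move=> y_gt0; have ym_gt0 : 0 < y ^+ m := exprn_gt0 m y_gt0.
rewrite /sunflower_eq /=.
have -> : 1 + (y ^+ m)^-1 - 1 = (y ^+ m)^-1 by ring.
rewrite invrK powR_exprK ?ltW //.
rewrite exprM [(y ^+ m) ^+ k]exprS [y ^+ k]exprSr; field; exact: lt0r_neq0.
Qed.

Lemma sunflower_eq_root : exists2 lam : R, 2 < lam < 4 & f lam = 0.
Proof.
pose p : {poly R} := 'X^(m * k) + 'X^k + 'X^m - 1.
set y0 := powR (3^-1 : R) m%:R^-1.
have y0m : y0 ^+ m = 3^-1 by rewrite powR_invnK // invr_ge0.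
have y0_gt0 : 0 < y0 by rewrite powR_gt0 // invr_gt0.
have y0_lt1 : y0 < 1.
  by rewrite -(ltr_pXn2r m_gt0) ?nnegrE ?ltW // y0m expr1n invf_lt1; lra.
have p_y0 : p.[y0] < 0.
  have y0k_lt : y0 ^+ k < 3^-1.
    have inv3_gt0 : (0 : R) < 3^-1 by rewrite invr_gt0.
    by rewrite exprS y0m; nra.
  have y0mk_le : y0 ^+ (m * k) <= 3^-1.
    rewrite exprM y0m exprS ler_piMr ?invr_ge0 // exprn_ile1 ?invr_ge0 //.
    by rewrite invf_le1; lra.
  rewrite !hornerE y0m; lra.
have p_1 : 0 < p.[1] by rewrite !hornerE !expr1n; lra.
have p_sign : p.[y0] * p.[1] < 0 by rewrite pmulr_llt0.
have [y] := poly_ivtoo (ltW y0_lt1) p_sign.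
rewrite in_itv /= => /andP [y0_lt_y y_lt1] /rootP p_y.
have y_gt0 : 0 < y by lra.
have ym_gt : 3^-1 < y ^+ m by rewrite -y0m ltrXn2r ?ltW // -lt0n.
have ym_lt1 : y ^+ m < 1 by rewrite exprn_ilt1 ?ltW // -lt0n.
exists (1 + (y ^+ m)^-1).
  have ym_gt0 : 0 < y ^+ m by rewrite exprn_gt0.
  have : 1 < (y ^+ m)^-1 by rewrite invf_gt1.
  have : (y ^+ m)^-1 < 3 by rewrite invf_plt ?posrE.
  lra.
rewrite sunflower_eq_invexpr //; move: p_y; rewrite !hornerE => p_y.
by rewrite (_ : 1 - _ - _ - _ = 0) ?mul0r //; lra.
Qed.

End CharacteristicEquation.

Section Sunflower.
Variable m : nat.
Hypothesis m_gt0 : (0 < m)%N.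
Local Notation k := m.+1.
Local Notation V := 'I_(sunflower_n k).
Local Notation petal := (sunflower_petal k).
Local Notation core := (sunflower_core k).
Local Notation center := (sunflower_center k).
Local Notation edges := (sunflower_edges k).
Local Notation hubs := (core :\ center).

(* Vertex [j * k] is the hub of petal [j], i.e. its intersection with the core. *)
Definition hub (j : nat) : V := inord (j * k).

Lemma in_petal (v : V) j : (v \in petal j) = (v %/ k == j)%N && (v < m * k)%N.
Proof. by rewrite inE. Qed.

Lemma in_core (v : V) :
  (v \in core) = (v == center) || ((v %% k == 0)%N && (v < m * k)%N).
Proof. by rewrite !inE. Qed.

Lemma in_sunflower_edges e :
  (e \in edges) = (e == core) || [exists j : 'I_m, e == petal j].
Proof.
rewrite !inE; congr orb.
by apply/imsetP/existsP => [[j _ ->]|[j /eqP ->]]; exists j.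
Qed.

Lemma val_center : val center = (m * k)%N. Proof. by []. Qed.

Lemma noncenter_lt (v : V) : v != center -> (v < m * k)%N.
Proof.
apply: contraNT; rewrite -leqNgt => v_ge; apply/eqP/val_inj/eqP.
by rewrite val_center eqn_leq v_ge -ltnS ltn_ord.
Qed.

Lemma center_notin_petal j : center \notin petal j.
Proof. by rewrite in_petal val_center ltnn andbF. Qed.

Lemma petal_neq_core j : petal j != core.
Proof.
apply: contraNneq (center_notin_petal j) => ->.
by rewrite in_core eqxx.
Qed.

Lemma divk_lt (v : V) : (v < m * k)%N -> (v %/ k < m)%N.
Proof. by rewrite ltn_divLR. Qed.

Lemma val_hub j : (j < m)%N -> val (hub j) = (j * k)%N.
Proof. by move=> jm; rewrite /= inordK // ltnS leq_pmul2r // ltnW. Qed.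

Lemma hub_in_petal j : (j < m)%N -> hub j \in petal j.
Proof. by move=> jm; rewrite in_petal val_hub // mulnK // eqxx ltn_pmul2r. Qed.

Lemma hub_neq_center j : (j < m)%N -> hub j != center.
Proof.
move=> jm; apply/eqP => /(congr1 val); rewrite val_hub // val_center.
by move/eqP; rewrite eqn_pmul2r // => /eqP j_m; rewrite j_m ltnn in jm.
Qed.

Lemma hubP (v : V) : reflect (v < m * k /\ v %% k = 0)%N (v \in hubs).
Proof.
rewrite in_setD1 in_core.
apply: (iffP idP) => [/andP [v_c /orP [/eqP v_c'|/andP [/eqP -> ->]]] //|[v_lt v_mod]].
  by rewrite v_c' eqxx in v_c.
rewrite v_mod v_lt eqxx orbT andbT.
by apply: contraTneq v_lt => ->; rewrite val_center ltnn.
Qed.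

Lemma hub_divkK (v : V) : v \in hubs -> hub (v %/ k) = v.
Proof.
move/hubP => [v_lt v_mod]; apply: val_inj; rewrite val_hub ?divk_lt //=.
by rewrite {2}(divn_eq v k) v_mod addn0.
Qed.

Lemma hub_in_hubs j : (j < m)%N -> hub j \in hubs.
Proof.
by move=> jm; apply/hubP; rewrite val_hub // modnMl ltn_pmul2r.
Qed.

Lemma hub_in_core j : (j < m)%N -> hub j \in core.
Proof. by move/hub_in_hubs; rewrite in_setD1 => /andP []. Qed.

Lemma leafP j (v : V) : (j < m)%N -> v \in petal j :\ hub j ->
  v \notin core /\ (v %/ k)%N = j.
Proof.
move=> jm; rewrite in_setD1 in_petal => /and3P [v_hub /eqP v_j v_lt]; split => //.
rewrite in_core negb_or v_lt andbT; apply/andP; split.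
  by apply: contraTneq v_lt => ->; rewrite val_center ltnn.
apply: contra v_hub => /eqP v_mod; apply/eqP; apply: val_inj.
by rewrite val_hub //= {1}(divn_eq v k) v_mod addn0 v_j.
Qed.

Lemma noncore_divk_lt (v : V) : v \notin core -> (v %/ k < m)%N.
Proof.
move=> v_core; apply/divk_lt/noncenter_lt.
by apply: contraNneq v_core => ->; rewrite in_core eqxx.
Qed.

Lemma petal_offset_lt j (s : 'I_k) : (j < m)%N -> (j * k + s < m * k)%N.
Proof. by move=> jm; have := ltn_ord s; nia. Qed.

Lemma petal_imset j : (j < m)%N -> petal j = [set inord (j * k + s) | s : 'I_k].
Proof.
move=> jm; have lt_mk := petal_offset_lt _ jm.
apply/setP => v; rewrite in_petal; apply/andP/imsetP => [[/eqP v_j v_lt]|[s _ ->]].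
  exists (Ordinal (ltn_pmod v (ltn0Sn m))) => //; apply: val_inj.
  by rewrite /= inordK -v_j -divn_eq // ltnS ltnW.
rewrite /= inordK; last by rewrite ltnS ltnW.
by rewrite divnMDl // divn_small // addn0 eqxx lt_mk.
Qed.

Lemma card_petal j : (j < m)%N -> #|petal j| = k.
Proof.
move=> jm; rewrite petal_imset // card_imset ?card_ord // => s t /(congr1 val).
have lt_n (u : 'I_k) : (j * k + u < sunflower_n k)%N.
  by rewrite ltnS ltnW // petal_offset_lt.
by rewrite /= !inordK // => /addnI /val_inj.
Qed.

Lemma card_hubs : #|hubs| = m.
Proof.
have -> : hubs = [set hub j | j : 'I_m].
  apply/setP => v; apply/idP/imsetP => [v_hub|[j _ ->]]; last exact: hub_in_hubs.
  by exists (Ordinal (divk_lt (proj1 (hubP _ v_hub)))); rewrite ?hub_divkK.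
rewrite card_imset ?card_ord // => i j /(congr1 val).
by rewrite !val_hub // => /eqP; rewrite eqn_pmul2r // => /eqP /val_inj.
Qed.

Lemma card_core : #|core| = k.
Proof. by rewrite (cardsD1 center) card_hubs in_core eqxx. Qed.

Lemma card_leaves j : (j < m)%N -> #|petal j :\ hub j| = m.
Proof. by move=> jm; move: (card_petal jm); rewrite (cardsD1 (hub j)) hub_in_petal // => -[]. Qed.

Lemma sunflower_edge_card e : e \in edges -> #|e| = k.
Proof.
rewrite in_sunflower_edges => /orP [/eqP -> | /existsP [j /eqP ->]].
  exact: card_core.
exact: card_petal.
Qed.

Lemma edges_at_center : [set e in edges | center \in e] = [set core].
Proof.
apply/setP => e; rewrite in_set in_set1; apply/andP/eqP => [[]|->].
  rewrite in_sunflower_edges => /orP [/eqP -> //|/existsP [j /eqP ->]].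
  by rewrite (negbTE (center_notin_petal j)).
by rewrite in_sunflower_edges eqxx in_core eqxx.
Qed.

Lemma edges_at_noncenter (v : V) : v != center ->
  [set e in edges | v \in e] =
  petal (v %/ k) |: (if v \in core then [set core] else set0).
Proof.
move=> v_center; have v_lt := noncenter_lt v_center.
have v_petal : v \in petal (v %/ k) by rewrite in_petal eqxx v_lt.
apply/setP => e; rewrite in_set in_sunflower_edges; case: ifP => v_core.
  rewrite in_setU1 in_set1; apply/andP/orP => [[/orP [/eqP ->|/existsP [j /eqP ->]] vj]|].
  - by right.
  - by left; move: vj; rewrite in_petal => /andP [/eqP ->].
  case=> /eqP ->; split => //; apply/orP; [right|by left].
  by apply/existsP; exists (Ordinal (divk_lt v_lt)).
rewrite in_setU in_set1 in_set0 orbF; apply/andP/eqP => [[/orP [/eqP ->|/existsP [j /eqP ->]]]|->].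
  - by rewrite v_core.
  - by rewrite in_petal => /andP [/eqP ->].
split => //; apply/orP; right; apply/existsP; by exists (Ordinal (divk_lt v_lt)).
Qed.

Lemma sunflower_uniform : k_uniform k edges.
Proof.
split; last exact: sunflower_edge_card.
by apply/set0Pn; exists core; rewrite in_sunflower_edges eqxx.
Qed.

Lemma sunflower_odd_bipartite : odd m -> odd_bipartite edges.
Proof.
move=> m_odd; exists (hubs); split.
- by apply/set0Pn; exists (hub 0); apply: hub_in_hubs.
- by apply/set0Pn; exists center; rewrite !inE eqxx.
move=> e; rewrite in_sunflower_edges => /orP [/eqP -> | /existsP [j /eqP ->]].
  by rewrite (setIidPr (subsetDl _ _)) card_hubs.
suff -> : petal j :&: (hubs) = [set hub j] by rewrite cards1.
apply/setP => v; rewrite in_setI in_set1; apply/andP/eqP => [[v_petal v_hub]|->].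
  by rewrite -(hub_divkK v_hub); move: v_petal; rewrite in_petal => /andP [/eqP ->].
by rewrite hub_in_petal ?hub_in_hubs.
Qed.

Section Laplacian.
Variables (R : realType) (x : V -> R).

Definition petal_prod j := \prod_(v in petal j) x v.
Definition core_prod := \prod_(v in core) x v.

Lemma lap_center : lap_apply k edges x center * x center = x center ^+ k - core_prod.
Proof.
rewrite lap_apply_mul_self; last exact: sunflower_edge_card.
by rewrite /degree edges_at_center cards1 big_set1 mul1r.
Qed.

Lemma lap_leaf v : v \notin core ->
  lap_apply k edges x v * x v = x v ^+ k - petal_prod (v %/ k).
Proof.
move=> v_core; have v_center : v != center.
  by apply: contraNneq v_core => ->; rewrite in_core eqxx.
rewrite lap_apply_mul_self; last exact: sunflower_edge_card.
by rewrite /degree edges_at_noncenter // (negbTE v_core) setU0 cards1 big_set1 mul1r.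
Qed.

Lemma lap_hub v : v \in hubs ->
  lap_apply k edges x v * x v = 2 * x v ^+ k - (petal_prod (v %/ k) + core_prod).
Proof.
rewrite in_setD1 => /andP [v_center v_core].
rewrite lap_apply_mul_self; last exact: sunflower_edge_card.
have petal_core : petal (v %/ k) \notin [set core] by rewrite in_set1 petal_neq_core.
by rewrite /degree edges_at_noncenter // v_core cardsU1 petal_core cards1 big_setU1 ?big_set1.
Qed.

End Laplacian.

Section Eigenvector.
Variables (R : realType) (lam : R).
Hypotheses (m_odd : odd m) (lam_gt2 : 2 < lam) (lam_root : sunflower_eq k lam = 0).

Let a := lam - 1.
Let r := powR a^-1 m%:R^-1.

Definition sunflower_eigvec (v : V) : R :=
  if v == center then a * r else if v \in core then - a else 1.

Let a_gt0 : 0 < a. Proof. by have := lam_gt2; rewrite /a; lra. Qed.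

Lemma sunflower_eigvec_petal_prod j : (j < m)%N -> petal_prod sunflower_eigvec j = - a.
Proof.
move=> jm; rewrite /petal_prod (big_setD1 _ (hub_in_petal jm)) big1 ?mulr1.
  by rewrite /= mulr1 /sunflower_eigvec (negbTE (hub_neq_center jm)) (hub_in_core jm).
move=> v /(leafP jm) [v_core _]; rewrite /sunflower_eigvec (negbTE v_core).
by case: eqP v_core => // ->; rewrite in_core eqxx.
Qed.

Lemma sunflower_eigvec_core_prod : core_prod sunflower_eigvec = - (a * r * a ^+ m).
Proof.
rewrite /core_prod (big_setD1 center) ?in_core ?eqxx // /sunflower_eigvec eqxx.
rewrite (eq_bigr (fun=> - a)) => [|v]; last first.
  by rewrite in_setD1 => /andP [/negbTE -> ->].
by rewrite /= prodr_const card_hubs exprNn -signr_odd m_odd expr1; ring.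
Qed.

Lemma sunflower_H_eigenvalue : H_eigenvalue k edges lam.
Proof.
have rm : r ^+ m = a^-1 by rewrite powR_invnK // invr_ge0 ltW.
have r_gt0 : 0 < r by rewrite powR_gt0 // invr_gt0.
have x_neq0 v : sunflower_eigvec v != 0.
  rewrite /sunflower_eigvec; case: ifP => _; first by rewrite mulf_neq0 ?lt0r_neq0.
  by case: ifP => _; rewrite ?oppr_eq0 lt0r_neq0.
exists sunflower_eigvec; split => [|v]; first by exists center.
apply: (mulIf (x_neq0 v)); rewrite -mulrA -exprSr.
have [->|v_center] := eqVneq v center.
  rewrite lap_center // sunflower_eigvec_core_prod /sunflower_eigvec eqxx.
  by rewrite !exprS exprMn rm /a; field; exact: lt0r_neq0 a_gt0.
have [v_core|v_leaf] := boolP (v \in core).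
  have v_hub : v \in hubs by rewrite in_setD1 v_center.
  rewrite lap_hub // sunflower_eigvec_petal_prod ?divk_lt ?(proj1 (hubP _ v_hub)) //.
  rewrite sunflower_eigvec_core_prod /sunflower_eigvec (negbTE v_center) v_core.
  have r_eq : r = lam - 2 - (a ^+ m)^-1.
    by move: lam_root; rewrite /sunflower_eq /= -exprVn -/a -/r; lra.
  rewrite r_eq exprS exprNn -signr_odd m_odd /a; field.
  exact: expf_neq0 (lt0r_neq0 a_gt0).
rewrite lap_leaf // sunflower_eigvec_petal_prod ?noncore_divk_lt //.
by rewrite /sunflower_eigvec (negbTE v_center) (negbTE v_leaf) expr1n /a; lra.
Qed.

End Eigenvector.

Section EigenvalueBound.
Variables (R : realType) (mu : R) (x : V -> R).
Hypotheses (m_odd : odd m) (mu_gt1 : 1 < mu).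
Hypothesis x_eig : forall v, lap_apply k edges x v = mu * x v ^+ m.

Local Notation a := (mu - 1).
Local Notation c := (a^-1 ^+ m).
Local Notation D := (mu - 2 - c).
Local Notation X v := (x v ^+ k).

Let k_even : ~~ odd k. Proof. by rewrite /= m_odd. Qed.
Let a_gt0 : 0 < a. Proof. by rewrite subr_gt0. Qed.

Let exprNk (y : R) : (- y) ^+ k = y ^+ k.
Proof. by rewrite exprNn -signr_odd (negbTE k_even) expr0 mul1r. Qed.

Let X_ge0 v : 0 <= X v. Proof. exact: exprn_even_ge0. Qed.

Let X_le0 v : X v <= 0 -> x v = 0.
Proof. by rewrite exprn_even_le0 // => /eqP. Qed.

Let lap_mul_self v : lap_apply k edges x v * x v = mu * X v.
Proof. by rewrite x_eig -mulrA -exprSr. Qed.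

Lemma eigen_center : core_prod x = - a * X center.
Proof. by have := lap_mul_self center; rewrite lap_center //; lra. Qed.

Lemma eigen_leaf v : v \notin core -> petal_prod x (v %/ k) = - a * X v.
Proof. by move=> v_core; have := lap_mul_self v; rewrite lap_leaf //; lra. Qed.

Lemma eigen_hub v : v \in hubs ->
  petal_prod x (v %/ k) + core_prod x = (2 - mu) * X v.
Proof. by move=> v_hub; have := lap_mul_self v; rewrite lap_hub //; lra. Qed.

(* All leaves of a petal carry the same value Q / a, where Q = - petal_prod, and raising
   the petal product to the even power k gives Q ^+ k = X (hub j) * (Q / a) ^+ m. *)
Lemma eigen_petal_prod_le j : (j < m)%N -> - petal_prod x j <= c * X (hub j).
Proof.
move=> jm; set Q := - petal_prod x j.
have [->|Q_neq0] := eqVneq Q 0; first by rewrite mulr_ge0 // exprn_ge0 // invr_ge0 ltW.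
have X_leaf v : v \in petal j :\ hub j -> X v = Q / a.
  move=> /(leafP jm) [v_core v_j]; rewrite /Q -v_j eigen_leaf //.
  by field; exact: lt0r_neq0.
have : Q ^+ k = X (hub j) * (Q / a) ^+ m.
  rewrite {1}/Q exprNk.
  rewrite /petal_prod -prodrXl (big_setD1 _ (hub_in_petal jm)) /=.
  by rewrite (eq_bigr _ X_leaf) prodr_const card_leaves.
move=> Qk; suff -> : Q = c * X (hub j) by [].
apply: (mulIf (expf_neq0 m Q_neq0)).
rewrite -exprS Qk expr_div_n exprVn; field.
exact: expf_neq0 (lt0r_neq0 a_gt0).
Qed.

Lemma eigen_hub_le v : v \in hubs -> D * X v <= - core_prod x.
Proof.
move=> v_hub; have := eigen_petal_prod_le (divk_lt (proj1 (hubP _ v_hub))).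
by rewrite hub_divkK // => petal_le; have := eigen_hub v_hub; lra.
Qed.

Hypothesis D_gt0 : 0 < D.

Lemma core_prod_neq0 : (exists v, x v != 0) -> core_prod x != 0.
Proof.
case=> v0 x_v0; apply: contra_neq x_v0 => core0.
have x_hub v : v \in hubs -> x v = 0.
  move=> v_hub; apply: X_le0; have := eigen_hub_le v_hub; rewrite core0 oppr0.
  by rewrite pmulr_rle0.
have [->|v0_center] := eqVneq v0 center.
  by apply: X_le0; have := eigen_center; rewrite core0; have := a_gt0; nra.
have [v0_core|v0_leaf] := boolP (v0 \in core).
  by apply: x_hub; rewrite in_setD1 v0_center.
apply: X_le0; have := eigen_leaf v0_leaf.
rewrite /petal_prod (big_setD1 _ (hub_in_petal (noncore_divk_lt v0_leaf))) /=.
by rewrite x_hub ?hub_in_hubs ?noncore_divk_lt // mul0r; have := a_gt0; nra.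
Qed.

(* With Q = - core_prod > 0: Q ^+ k = X center * (product of X over the m hubs)
   <= (Q / a) * (Q / D) ^+ m. *)
Lemma sunflower_eigen_bound : (exists v, x v != 0) -> a * D ^+ m <= 1.
Proof.
move=> x_neq0; set Q := - core_prod x.
have Q_gt0 : 0 < Q.
  rewrite lt_def oppr_eq0 core_prod_neq0 //= /Q eigen_center mulNr opprK.
  by rewrite mulr_ge0 // ltW.
have X_center : X center = Q / a.
  by rewrite /Q eigen_center; field; exact: lt0r_neq0.
have X_hub v : v \in hubs -> 0 <= X v <= Q / D.
  by move=> v_hub; rewrite X_ge0 ler_pdivlMr // mulrC eigen_hub_le.
have : Q ^+ k <= Q / a * (Q / D) ^+ m.
  rewrite {1}/Q exprNk.
  rewrite /core_prod -prodrXl (big_setD1 center) ?in_core ?eqxx //= X_center.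
  rewrite ler_pM2l ?divr_gt0 // -[m in (Q / D) ^+ m]card_hubs -prodr_const.
  exact: ler_prod.
have -> : Q / a * (Q / D) ^+ m = Q ^+ k / (a * D ^+ m).
  by rewrite expr_div_n exprS; field; rewrite expf_neq0 ?lt0r_neq0.
by rewrite ler_pdivlMr ?mulr_gt0 ?exprn_gt0 // ger_pMr ?exprn_gt0.
Qed.

End EigenvalueBound.

Lemma H_eigenvalue_sunflower_eq_le0 (R : realType) (mu : R) :
  odd m -> 2 < mu -> H_eigenvalue k edges mu -> sunflower_eq k mu <= 0.
Proof.
move=> m_odd mu_gt2 [x [x_neq0 x_eig]].
rewrite /sunflower_eq /= leNgt; apply/negP => f_gt0.
set a := mu - 1 in f_gt0; set r := powR a^-1 m%:R^-1 in f_gt0.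
have a_gt0 : 0 < a by rewrite /a; lra.
have r_ge0 : 0 <= r by exact: powR_ge0.
have D_gt_r : r < mu - 2 - a^-1 ^+ m by lra.
have mu_gt1 : 1 < mu by lra.
have := sunflower_eigen_bound m_odd mu_gt1 x_eig (le_lt_trans r_ge0 D_gt_r) x_neq0.
have rm : r ^+ m = a^-1 by rewrite powR_invnK // invr_ge0 ltW.
have : r ^+ m < (mu - 2 - a^-1 ^+ m) ^+ m by rewrite ltrXn2r // -lt0n.
rewrite rm -/a.
have : a * a^-1 = 1 by rewrite mulfV ?lt0r_neq0.
nra.
Qed.

End Sunflower.

Theorem proposition3p4 (R : realType) (k : nat) :
  (4 <= k)%N -> ~~ odd k ->
  k_uniform k (sunflower_edges k) /\
  odd_bipartite (sunflower_edges k) /\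
  exists lam : R,
    [/\ 2 < lam < 4, sunflower_eq k lam = 0,
        (forall mu : R, 2 < mu < 4 -> sunflower_eq k mu = 0 -> mu = lam) &
        largest_H_eigenvalue k (sunflower_edges k) lam].
Proof.
case: k => [//|m] k_ge4 k_even.
have m_gt0 : (0 < m)%N by lia.
have m_odd : odd m by rewrite /= negbK in k_even.
split; first exact: sunflower_uniform.
split; first exact: sunflower_odd_bipartite.
have [lam lam_range lam_root] := sunflower_eq_root R m_gt0.
have lam_gt2 : 2 < lam by case/andP: lam_range.
exists lam; split => //.
  move=> mu /andP [mu_gt2 _] mu_root.
  by apply: sunflower_eq_inj; rewrite ?mu_root ?lam_root //; lra.
split; first exact: sunflower_H_eigenvalue.
move=> mu mu_eig; rewrite leNgt; apply/negP => lam_lt_mu.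
have := H_eigenvalue_sunflower_eq_le0 m_gt0 m_odd (lt_trans lam_gt2 lam_lt_mu) mu_eig.
have lam_gt1 : 1 < lam by lra.
by have := sunflower_eq_lt m lam_gt1 lam_lt_mu; rewrite lam_root; lra.
Qed.
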